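(* Let $\mathfrak g=\mathfrak g(V,\omega,D)$ be a generalized oscillator algebra and let $\lambda=(z^*,\alpha,t^* )\in\mathfrak g'$ be such that the coadjoint orbit $\mathcal O_\lambda$ is semi-equicontinuous. Suppose there exists $(z,x,t)$ in the interior $B(\mathcal O_\lambda)^0$ of $B(\mathcal O_\lambda)$ with $z^*t>0$. Then: (i) the symmetric bilinear form $Q:V\times V\to\mathbb R$, $Q(v,w):=\omega(Dv,w)$, is positive definite; (ii) $D^*\alpha=\alpha\circ D$ and all linear forms $i_x\omega=\omega(x,\cdot)$, $x\in V$, are $Q$-continuous, and $x\mapsto\|i_x\omega\|_Q$ is bounded on some $0$-neighborhood in $V$.
   Context: $(V,\omega)$ is a real locally convex space with a continuous non-degenerate alternating bilinear form $\omega$; $\gamma:\mathbb R\to\mathrm{Sp}(V,\omega)$ is a one-parameter group defining a smooth action of $\mathbb R$ on $V$, with generator $D=\gamma'(0)$. The generalized oscillator group $G=G(V,\omega,\gamma)=\mathbb R\times V\times\mathbb R$ has multiplication $(z,v,t)(z',v',t')=(z+z'+\frac12\omega(v,\gamma(t)v'),v+\gamma(t)v',t+t')$, and its Lie algebra $\mathfrak g(V,\omega,D)=\mathbb R\times V\times\mathbb R$ has bracket $[(z,v,t),(z',v',t')]=(\omega(v,v'),tDv'-t'Dv,0)$. Elements of $\mathfrak g'$ are written $\lambda=(z^*,\alpha,t^* )$ with $z^*,t^*\in\mathbb R$, $\alpha\in V'$, meaning $\lambda(z,x,t)=z^*z+\alpha(x)+t^*t$. Coadjoint orbits are $\mathcal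 O_\lambda=\mathrm{Ad}^*(G)\lambda$, $\mathrm{Ad}^*(g)\lambda=\lambda\circ\mathrm{Ad}(g)^{-1}$. For $E\subseteq\mathfrak g'$, $s_E(y)=\sup\langle E,-y\rangle$; $E$ is semi-equicontinuous if $s_E$ is bounded on a neighborhood of some point; $B(E)=\{y\in\mathfrak g:\inf\langle E,y\rangle>-\infty\}$. A linear form $\beta$ on $V$ is $Q$-continuous if $\|\beta\|_Q:=\sup\{\beta(v):Q(v,v)\le1\}<\infty$. *)

From HB Require Import structures.
From mathcomp Require Import all_boot all_order all_algebra.
From mathcomp Require Import all_classical all_reals all_analysis.
Set Implicit Arguments.
Unset Strict Implicit.
Unset Printing Implicit Defensive.
Import Order.TTheory GRing.Theory Num.Theory.
Local Open Scope ring_scope.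
Local Open Scope classical_set_scope.

Section Defs.
Context {R : realType}.

Definition has_dderiv {E F : tvsType R} (f : E -> F) (x h : E) (l : F) : Prop :=
  (fun s : R => s^-1 *: (f (x + s *: h) - f x)) @ 0^' --> l.

(** Bastiani C^k maps: C^0 = continuous; C^{k+1} = continuous, all directional
    derivatives df(x,h) exist and df : E x E -> F is C^k. *)
Fixpoint Ck (k : nat) {E F : tvsType R} (f : E -> F) : Prop :=
  match k with
  | 0 => continuous f
  | k.+1 => continuous f /\
      exists df : (E * E)%type -> F,
        (forall x h, has_dderiv f x h (df (x, h))) /\ Ck k df
  end.

Definition smooth {E F : tvsType R} (f : E -> F) : Prop := forall k, Ck k f.

Section Osc.
Context {V : tvsType R} (omega : V -> V -> R) (gamma : R -> V -> V).

Definition gmul (g h : R * V * R) : R * V * R :=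
  let: (z, v, t) := g in let: (z', v', t') := h in
  (z + z' + 2^-1 * omega v (gamma t v'), v + gamma t v', t + t').

Definition ginv (g : R * V * R) : R * V * R :=
  let: (z, v, t) := g in (- z, - gamma (- t) v, - t).

Definition gconj (g h : R * V * R) : R * V * R := gmul (gmul g h) (ginv g).

(** Coadjoint orbit of lam in g' (functionals on g = R x V x R):
    O_lam = { Ad^*(g) lam = lam o Ad(g)^-1 : g in G }, where Ad(g) = T_e(c_g)
    is the derivative of c_g at the identity e = (0,0,0) (G = R x V x R is its
    own global chart, g = T_e G).  mu = lam o Ad(g)^-1 is expressed as
    mu o Ad(g) = lam. *)
Definition coadjoint_orbit (lam : R * V * R -> R) : set (R * V * R -> R) :=
  [set mu : (R * V * R -> R) | exists (g : R * V * R) (Adg : R * V * R -> R * V * R),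
     (forall Y, has_dderiv (gconj g) 0 Y (Adg Y)) /\ (fun Y => mu (Adg Y)) = lam].

End Osc.

Definition dual_pt {V : tvsType R} (zs : R) (alpha : V -> R) (ts : R)
  : R * V * R -> R :=
  fun y => zs * y.1.1 + alpha y.1.2 + ts * y.2.

Section Supp.
Context {W : tvsType R}.

Definition support_fun (E : set (W -> R)) (y : W) : \bar R :=
  ereal_sup [set (mu (- y))%:E | mu in E].

Definition semi_equicontinuous (E : set (W -> R)) : Prop :=
  exists y0 : W, exists U : set W, nbhs y0 U /\
    exists M : R, forall y, U y ->
      (- M%:E <= support_fun E y)%E /\ (support_fun E y <= M%:E)%E.

Definition Bset (E : set (W -> R)) : set W :=
  [set y | (-oo < ereal_inf [set (mu y)%:E | mu in E])%E].

End Supp.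

Definition Qnorm {V : Type} (Q : V -> V -> R) (beta : V -> R) : \bar R :=
  ereal_sup [set (beta v)%:E | v in [set v | Q v v <= 1]].

Definition Q_continuous {V : Type} (Q : V -> V -> R) (beta : V -> R) : Prop :=
  (Qnorm Q beta < +oo)%E.

End Defs.

From HB Require Import structures.
From mathcomp Require Import all_boot all_order all_algebra.
From mathcomp Require Import all_classical all_reals all_analysis.
From mathcomp Require Import ring lra.
Import Order.TTheory GRing.Theory Num.Theory.
Local Open Scope ring_scope.
Local Open Scope classical_set_scope.

(* For every [v], [Ad^*((0, v, 0)) lam] lies in the orbit; evaluated at [(a, b, c)] along the
   line [s v] it is the quadratic [lam (a, b, c) + s (c alpha (D v) - z^* omega (v, b))
   + s^2 (c z^* / 2) Q (v, v)].  If [(a, b, c)] lies in [B(O_lam)] this quadratic is bounded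
   below in [s]: hence [Q (v, v) >= 0] when [c z^* > 0], the linear coefficient vanishes when
   [Q (v, v) = 0], and [s = 1, -1] bound it on the [Q]-unit ball.  Moving [b] inside the
   interior of [B(O_lam)] turns these facts into statements about [omega (v, _)]:
   nondegeneracy gives definiteness, and differences give [Q]-boundedness of every [i_x omega]
   and of [alpha \o D].  Semi-equicontinuity bounds the same quadratics from below uniformly
   near some point, which makes the bound on [||i_x omega||_Q] uniform for [x] near [0]. *)

Section TopologicalModuleLimits.
Context {T : Type} {F : set_system T} {FF : Filter F}.

Lemma tmod_cvgD {M : topologicalZmodType} {f g : T -> M} {a b : M} :
  f @ F --> a -> g @ F --> b -> (fun x => f x + g x) @ F --> a + b.
Proof.
move=> fa gb.
exact: (@continuous2_cvg _ _ _ _ _ _ f g (fun x y => x + y) _ _ (@add_continuous M (a, b)) fa gb).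
Qed.

Lemma tmod_cvgB {M : topologicalZmodType} {f g : T -> M} {a b : M} :
  f @ F --> a -> g @ F --> b -> (fun x => f x - g x) @ F --> a - b.
Proof.
move=> fa gb.
exact: (@continuous2_cvg _ _ _ _ _ _ f g (fun x y => x - y) _ _ (@sub_continuous M (a, b)) fa gb).
Qed.

Lemma tmod_cvgZ {K : numDomainType} {M : topologicalLmodType K} {k : T -> K^o} {f : T -> M}
  {r : K^o} {a : M} :
  k @ F --> r -> f @ F --> a -> (fun x => k x *: f x) @ F --> r *: a.
Proof.
move=> kr fa.
exact: (@continuous2_cvg _ _ _ _ _ _ k f (fun x y => x *: y) _ _ (@scale_continuous K M (r, a)) kr fa).
Qed.

End TopologicalModuleLimits.

Section LboundedPolynomials.
Variable R : realFieldType.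
Implicit Types m K L A : R.

Lemma lbounded_affine_slope_eq0 m K L : (forall s, m <= K + s * L) -> L = 0.
Proof.
move=> lb; have [//|L_neq0] := eqVneq L 0.
by have := lb ((m - K - 1) / L); rewrite divfK //; lra.
Qed.

(* Averaging [s] and [-s] gives [m <= K + s^2 A]; the chosen [s >= 1] has
   [s^2 A <= s A < m - K]. *)
Lemma lbounded_quadratic_lead_ge0 m K L A :
  (forall s, m <= K + s * L + s ^+ 2 * A) -> 0 <= A.
Proof.
move=> lb; rewrite leNgt; apply/negP => A_lt0.
have even s : m <= K + s ^+ 2 * A.
  by have := lb s; have := lb (- s); rewrite sqrrN; lra.
pose s := (`|K - m| + 1) / - A + 1.
have s_ge1 : 1 <= s by rewrite lerDr divr_ge0 // ?oppr_ge0 ?ltW // ltr_pwDr.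
have sA : s * A = - (`|K - m| + 1) + A.
  by rewrite /s; field; rewrite ?oppr_eq0 lt_eqF.
have s2A : s ^+ 2 * A <= s * A.
  have : 0 <= (s - 1) * - A by rewrite mulr_ge0 // ?subr_ge0 // oppr_ge0 ltW.
  by rewrite expr2; nra.
have := even s; have := ler_norm (K - m); lra.
Qed.

End LboundedPolynomials.

Section LinearMaps.
Context {K : pzRingType} {U W : lmodType K} {f : U -> W}.
Hypothesis f_lin : forall a u v, f (a *: u + v) = a *: f u + f v.

Lemma lin0 : f 0 = 0.
Proof.
have := f_lin 1 0 0; rewrite scaler0 addr0 scale1r => f00.
by apply: (@addrI _ (f 0)); rewrite addr0 -f00.
Qed.

Lemma linD u v : f (u + v) = f u + f v.
Proof. by rewrite -[u in LHS]scale1r f_lin scale1r. Qed.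

Lemma linZ a u : f (a *: u) = a *: f u.
Proof. by rewrite -[_ *: u]addr0 f_lin lin0 addr0. Qed.

Lemma linN u : f (- u) = - f u.
Proof. by rewrite -scaleN1r linZ scaleN1r. Qed.

Lemma linB u v : f (u - v) = f u - f v.
Proof. by rewrite linD linN. Qed.

End LinearMaps.

Section OscillatorAlgebra.
Context {R : realType} {V : tvsType R}
  (omega : V -> V -> R) (gamma : R -> V -> V) (D : V -> V).
Hypothesis omega_cont : continuous (fun p : V * V => (omega p.1 p.2 : R^o)).
Hypothesis omega_linl : forall (a : R) (u v w : V),
  omega (a *: u + v) w = a * omega u w + omega v w.
Hypothesis omega_linr : forall (a : R) (u v w : V),
  omega u (a *: v + w) = a * omega u v + omega u w.
Hypothesis omega_alt : forall v : V, omega v v = 0.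
Hypothesis omega_nondeg : forall v : V, (forall w : V, omega v w = 0) -> v = 0.
Hypothesis gamma_lin : forall (t a : R) (v w : V),
  gamma t (a *: v + w) = a *: gamma t v + gamma t w.
Hypothesis gamma0 : forall v : V, gamma 0 v = v.
Hypothesis D_gen : forall v : V, has_dderiv (fun t : R => gamma t v) 0 1 (D v).

(* Ascribing a triple to [RVR] selects the product topology that [has_dderiv] uses. *)
Local Notation RVR := ((R : tvsType R) * V * (R : tvsType R))%type.

Let omega_l w : forall a u v, (omega^~ w : V -> R^o) (a *: u + v) = a *: omega u w + omega v w.
Proof. by move=> a u v; rewrite /= omega_linl. Qed.
Let omega_r u : forall a v w, (omega u : V -> R^o) (a *: v + w) = a *: omega u v + omega u w.
Proof. by move=> a v w; rewrite omega_linr. Qed.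

Lemma omega0r u : omega u 0 = 0. Proof. exact: lin0 (omega_r u). Qed.
Lemma omegaDl u v w : omega (u + v) w = omega u w + omega v w.
Proof. exact (linD (omega_l w) _ _). Qed.
Lemma omegaDr u v w : omega u (v + w) = omega u v + omega u w.
Proof. exact (linD (omega_r u) _ _). Qed.
Lemma omegaZl a u w : omega (a *: u) w = a * omega u w.
Proof. exact (linZ (omega_l w) _ _). Qed.
Lemma omegaZr a u v : omega u (a *: v) = a * omega u v.
Proof. exact (linZ (omega_r u) _ _). Qed.
Lemma omegaNr u v : omega u (- v) = - omega u v.
Proof. exact (linN (omega_r u) _). Qed.
Lemma omegaBl u v w : omega (u - v) w = omega u w - omega v w.
Proof. exact (linB (omega_l w) _ _). Qed.
Lemma omegaBr u v w : omega u (v - w) = omega u v - omega u w.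
Proof. exact (linB (omega_r u) _ _). Qed.

Lemma omegaC u v : omega u v = - omega v u.
Proof.
have := omega_alt (u + v); rewrite omegaDl !omegaDr !omega_alt add0r addr0.
by move/eqP; rewrite addr_eq0 => /eqP.
Qed.

Lemma gammaZ t a v : gamma t (a *: v) = a *: gamma t v.
Proof. exact (linZ (gamma_lin t) _ _). Qed.
Lemma gammaN t v : gamma t (- v) = - gamma t v.
Proof. exact (linN (gamma_lin t) _). Qed.

Lemma omega_cvg {T : Type} {F : set_system T} {FF : Filter F} (f g : T -> V) a b :
  f @ F --> a -> g @ F --> b -> (fun x => (omega (f x) (g x) : R^o)) @ F --> (omega a b : R^o).
Proof.
move=> fa gb.
exact: (@continuous2_cvg _ _ _ (R^o) _ _ f g (fun x y => (omega x y : R^o)) _ _ (omega_cont (a, b)) fa gb).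
Qed.

Lemma generator_dquot_cvg v : (fun s : R => s^-1 *: (gamma s v - v)) @ 0^' --> D v.
Proof.
have gamma_s (s : R) : gamma ((0 : R) + s *: (1 : R)) v = gamma s v.
  by rewrite add0r; congr gamma; exact: mulr1.
by have := D_gen v; rewrite /has_dderiv gamma0; under eq_fun => s do rewrite gamma_s.
Qed.

Lemma generator_dquot_cvgM c v : (fun s : R => s^-1 *: (gamma (s * c) v - v)) @ 0^' --> c *: D v.
Proof.
have [->|c_neq0] := eqVneq c 0.
  under eq_fun => s do rewrite mulr0 gamma0 subrr scaler0.
  by rewrite scale0r; exact: cvg_cst.
have -> : (fun s : R => s^-1 *: (gamma (s * c) v - v)) =
    (fun s : R => c *: ((fun t : R => t^-1 *: (gamma t v - v)) (s * c))).
  by apply/funext => s /=; rewrite scalerA invfM mulrCA mulfV // mulr1.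
apply: tmod_cvgZ; first exact: cvg_cst.
apply: (cvg_comp (fun s : R => s * c) (fun t : R => t^-1 *: (gamma t v - v))); last exact: generator_dquot_cvg.
have mulc_inj (s : R) : s * c = 0 * c -> s = 0.
  by move/eqP; rewrite mul0r mulf_eq0 (negbTE c_neq0) orbF => /eqP.
have := @continuous_injective_withinNx R^o R^o (fun s => s * c) 0
  (@mulrr_continuous _ c 0) mulc_inj.
by rewrite mul0r.
Qed.

(* [V] need not be Hausdorff, so the two limits are compared after pairing with
   [omega], which separates points. *)
Lemma generatorZ r v : D (r *: v) = r *: D v.
Proof.
apply/eqP; rewrite -subr_eq0; apply/eqP; apply: omega_nondeg => u.
rewrite omegaBl; apply/eqP; rewrite subr_eq0; apply/eqP.
pose quot s := (omega (r *: (s^-1 *: (gamma s v - v))) u : R^o).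
have to_Drv : quot @ 0^' --> (omega (D (r *: v)) u : R^o).
  have -> : quot = (fun s => omega (s^-1 *: (gamma s (r *: v) - r *: v)) u).
    by apply/funext => s; rewrite /quot gammaZ -scalerBr !scalerA mulrC.
  by apply: omega_cvg; [exact: generator_dquot_cvg | exact: cvg_cst].
have to_rDv : quot @ 0^' --> (omega (r *: D v) u : R^o).
  apply: omega_cvg; last exact: cvg_cst.
  by apply: tmod_cvgZ; [exact: cvg_cst | exact: generator_dquot_cvg].
exact: (cvg_unique (@norm_hausdorff _ R^o) to_Drv to_rDv).
Qed.

Lemma gconj_0v0 v h1 h2 h3 :
  gconj omega gamma (0, v, 0) (h1, h2, h3) =
  (h1 + 2^-1 * omega v h2 - 2^-1 * omega (v + h2) (gamma h3 v), h2 + (v - gamma h3 v), h3).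
Proof.
rewrite /gconj /gmul /ginv /= !oppr0 !add0r !addr0 !gamma0 gammaN omegaNr.
by congr (_, _, _); [rewrite mulrN | rewrite addrA [v + h2]addrC].
Qed.

Lemma gconj_diff_quotient v a b c s : s != 0 ->
  let q := s^-1 *: (gamma (s * c) v - v) in
  s^-1 *: (gconj omega gamma (0, v, 0) (0 + s *: (a, b, c)) - gconj omega gamma (0, v, 0) 0) =
  (a + omega v b - 2^-1 * omega v q - 2^-1 * (s * omega b q), b - q, c).
Proof.
move=> s_neq0 q.
have gamma_q : gamma (s * c) v = v + s *: q by rewrite /q scalerA mulfV // scale1r addrC subrK.
have -> : gconj omega gamma (0, v, 0) 0 = 0.
  rewrite (_ : 0 = (0, 0, 0)) // gconj_0v0.
  by rewrite omega0r addr0 gamma0 omega_alt subrr mulr0 !addr0 subrr.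
rewrite add0r subr0 (_ : s *: (a, b, c) = (s * a, s *: b, s * c)) // gconj_0v0 gamma_q.
rewrite (_ : forall (x1 x3 : R) (x2 : V),
  s^-1 *: (x1, x2, x3) = (s^-1 * x1, s^-1 *: x2, s^-1 * x3)) //.
congr (_, _, _).
- by rewrite omegaZr omegaDl !omegaDr !omegaZl !omegaZr omega_alt (omegaC b v); field.
- rewrite scalerDr scalerA mulVf // scale1r opprD addrA subrr add0r.
  by rewrite scalerN scalerA mulVf // scale1r.
- by rewrite mulKf.
Qed.

Definition Ad v (Y : R * V * R) : R * V * R :=
  (Y.1.1 + omega v Y.1.2 - 2^-1 * (Y.2 * omega v (D v)), Y.1.2 - Y.2 *: D v, Y.2).

Lemma Ad_dderiv v Y : has_dderiv (gconj omega gamma (0, v, 0)) 0 Y (Ad v Y).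
Proof.
case: Y => [[a b] c]; rewrite /has_dderiv.
pose q s := s^-1 *: (gamma (s * c) v - v).
pose E s : RVR :=
  (a + omega v b - 2^-1 * omega v (q s) - 2^-1 * (s * omega b (q s)), b - q s, c).
have E_cvg : E @ 0^' --> (Ad v (a, b, c) : RVR).
  have -> : Ad v (a, b, c) =
      (a + omega v b - 2^-1 * omega v (c *: D v) - 2^-1 * (0 * omega b (c *: D v)),
       b - c *: D v, c).
    by rewrite /Ad /= mul0r mulr0 subr0 omegaZr.
  have first_cvg : (fun s : R => a + omega v b - 2^-1 * omega v (q s)
                                  - 2^-1 * (s * omega b (q s)) : R^o) @ 0^' -->
      (a + omega v b - 2^-1 * omega v (c *: D v) - 2^-1 * (0 * omega b (c *: D v)) : R^o).
    apply: cvgB; [apply: cvgB; [exact: cvg_cst|] |]; apply: cvgMl_tmp.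
      by apply: omega_cvg; [exact: cvg_cst | exact: generator_dquot_cvgM].
    apply: cvgM; last by apply: omega_cvg; [exact: cvg_cst | exact: generator_dquot_cvgM].
    by move=> P; exact: (@nbhs_dnbhs R^o 0 P).
  have second_cvg : (fun s : R => b - q s) @ 0^' --> b - c *: D v.
    by apply: tmod_cvgB; [exact: cvg_cst | exact: generator_dquot_cvgM].
  exact: (cvg_pair (cvg_pair first_cvg second_cvg) (cvg_cst _)).
apply: cvg_trans E_cvg; apply: near_eq_cvg.
by apply: filterS (nbhs_dnbhs_neq 0) => s s_neq0; rewrite gconj_diff_quotient.
Qed.

Variables (zs ts : R) (alpha : V -> R).
Hypothesis alpha_lin : forall (a : R) (v w : V), alpha (a *: v + w) = a * alpha v + alpha w.

Local Notation lam := (dual_pt zs alpha ts).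
Local Notation orbit := (coadjoint_orbit omega gamma lam).

Let alpha_lin_o : forall a u v, (alpha : V -> R^o) (a *: u + v) = a *: alpha u + alpha v.
Proof. by move=> a u v; rewrite alpha_lin. Qed.

Lemma alphaD u v : alpha (u + v) = alpha u + alpha v.
Proof. exact (linD alpha_lin_o _ _). Qed.
Lemma alphaZ a u : alpha (a *: u) = a * alpha u.
Proof. exact (linZ alpha_lin_o _ _). Qed.
Lemma alphaN u : alpha (- u) = - alpha u.
Proof. exact (linN alpha_lin_o _). Qed.

(* [Ad^*((0, v, 0)) lam = lam \o Ad (- v)], since [Ad (- v)] inverts [Ad v]. *)
Definition orbit_elt v (Y : R * V * R) : R :=
  lam (Y.1.1 - omega v Y.1.2 - 2^-1 * (Y.2 * omega v (D v)), Y.1.2 + Y.2 *: D v, Y.2).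

Lemma orbit_elt_in v : orbit (orbit_elt v).
Proof.
exists (0, v, 0), (Ad v); split; first exact: Ad_dderiv.
apply/funext => -[[a b] c]; rewrite /orbit_elt /Ad /dual_pt /=.
by rewrite subrK omegaBr omegaZr; congr (zs * _ + _ + _); field.
Qed.

Lemma orbit_eltN v Y : orbit_elt v (- Y) = - orbit_elt v Y.
Proof.
case: Y => [[a b] c]; rewrite /orbit_elt /dual_pt /=.
by rewrite omegaNr scaleNr !alphaD !alphaN; ring.
Qed.

Definition lin_coef (b : V) (c : R) v := c * alpha (D v) - zs * omega v b.

Lemma orbit_eltZ s v a b c : orbit_elt (s *: v) (a, b, c) =
  lam (a, b, c) + s * lin_coef b c v + s ^+ 2 * (c * zs / 2 * omega (D v) v).
Proof.
rewrite /orbit_elt /lin_coef /dual_pt /= generatorZ alphaD !alphaZ.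
by rewrite !omegaZl !omegaZr (omegaC v (D v)); field.
Qed.

Lemma Bset_orbit_lbound y : Bset orbit y -> exists m, forall v, m <= orbit_elt v y.
Proof.
rewrite /Bset /=; set S := [set _ | _ in _] => S_inf.
have inf_le v : (ereal_inf S <= (orbit_elt v y)%:E)%E.
  by apply: ereal_inf_lbound; exists (orbit_elt v) => //; exact: orbit_elt_in.
move: S_inf inf_le; case: (ereal_inf S) => [r _ inf_le | _ inf_le | //].
- by exists r => v; rewrite -lee_fin inf_le.
- by have := inf_le 0; rewrite leNgt ltry.
Qed.

Lemma support_orbit_lbound y M : (support_fun orbit y <= M%:E)%E ->
  forall v, - M <= orbit_elt v y.
Proof.
move=> sup_le v; rewrite lerNl -orbit_eltN -lee_fin; apply: le_trans sup_le.
by apply: ereal_sup_ubound; exists (orbit_elt v) => //; exact: orbit_elt_in.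
Qed.

Section LboundedOrbit.
Context {m a c : R} {b : V}.
Hypothesis orbit_lb : forall v, m <= orbit_elt v (a, b, c).

Lemma orbit_lb_quad_ge0 v : 0 <= c * zs / 2 * omega (D v) v.
Proof.
by apply: (@lbounded_quadratic_lead_ge0 _ m (lam (a, b, c)) (lin_coef b c v)) => s;
  rewrite -orbit_eltZ.
Qed.

Lemma orbit_lb_lin_coef0 v : omega (D v) v = 0 -> lin_coef b c v = 0.
Proof.
move=> Qv0; apply: (@lbounded_affine_slope_eq0 _ m (lam (a, b, c))) => s.
by have := orbit_lb (s *: v); rewrite orbit_eltZ Qv0 mulr0 mulr0 addr0.
Qed.

Lemma orbit_lb_lin_coef_bound v : 0 <= omega (D v) v <= 1 ->
  `|lin_coef b c v| <= lam (a, b, c) + `|c * zs / 2| - m.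
Proof.
move=> /andP[Qv_ge0 Qv_le1].
have := orbit_lb (1 *: v); have := orbit_lb (-1 *: v); rewrite !orbit_eltZ.
rewrite sqrrN expr1n !mul1r mulN1r.
have : c * zs / 2 * omega (D v) v <= `|c * zs / 2|.
  by rewrite (le_trans (ler_norm _)) // normrM (ger0_norm Qv_ge0) ler_piMr.
rewrite ler_norml; lra.
Qed.

End LboundedOrbit.

Definition Qbounded (beta : V -> R) :=
  exists C, forall v, omega (D v) v <= 1 -> `|beta v| <= C.

Lemma Qnorm_le (beta : V -> R) C : (forall v, omega (D v) v <= 1 -> beta v <= C) ->
  (Qnorm (fun v w => omega (D v) w) beta <= C%:E)%E.
Proof. by move=> beta_le; apply: ge_ereal_sup => _ [v Qv <-]; rewrite lee_fin beta_le. Qed.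

Lemma Qbounded_Q_continuous beta : Qbounded beta -> Q_continuous (fun v w => omega (D v) w) beta.
Proof.
move=> [C beta_le]; apply: le_lt_trans (ltry C); apply: Qnorm_le => v Qv.
exact: le_trans (ler_norm _) (beta_le v Qv).
Qed.

Lemma QboundedD {f g : V -> R} : Qbounded f -> Qbounded g -> Qbounded (fun v => f v + g v).
Proof.
move=> [Cf f_le] [Cg g_le]; exists (Cf + Cg) => v Qv.
by rewrite (le_trans (ler_normD _ _)) // lerD ?f_le ?g_le.
Qed.

Lemma QboundedZ (k : R) {f : V -> R} : Qbounded f -> Qbounded (fun v => k * f v).
Proof.
move=> [C f_le]; exists (`|k| * C) => v Qv.
by rewrite normrM ler_wpM2l ?f_le.
Qed.

Lemma QboundedZ_inv {k : R} {f : V -> R} : k != 0 -> Qbounded (fun v => k * f v) -> Qbounded f.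
Proof.
move=> k_neq0 /(QboundedZ k^-1); congr Qbounded; apply/funext => v.
by rewrite mulrA mulVf ?mul1r.
Qed.

Lemma lin_coefD b w c v : lin_coef (b + w) c v = lin_coef b c v + zs * omega w v.
Proof. by rewrite /lin_coef omegaDr (omegaC v w); ring. Qed.

Section InteriorPoint.
Context {a c : R} {b : V}.
Hypothesis B_interior : interior (Bset orbit) (a, b, c).
Hypothesis zsc_gt0 : 0 < zs * c.

Let B_abc : Bset orbit (a, b, c) := nbhs_singleton B_interior.

Let zs_neq0 : zs != 0.
Proof. by apply: contraTneq zsc_gt0 => ->; rewrite mul0r ltxx. Qed.

Lemma interior_Bset_shift w : exists2 e : R, e != 0 & Bset orbit (a, b + e *: w, c).
Proof.
have shift_cvg : (fun e : R => b + e *: w) @ 0^' --> b.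
  rewrite -[b in _ --> b]addr0 -(scale0r w).
  apply: tmod_cvgD; first exact: cvg_cst.
  apply: tmod_cvgZ; last exact: cvg_cst.
  by move=> P; exact: (@nbhs_dnbhs R^o 0 P).
have shift3_cvg : (fun e : R => (a, b + e *: w, c) : RVR)
    @ 0^' --> ((a, b, c) : RVR).
  exact: cvg_pair (cvg_pair (cvg_cst _) shift_cvg) (cvg_cst _).
have near_B : \forall e \near 0^', Bset orbit (a, b + e *: w, c) := shift3_cvg _ B_interior.
have [e [Be e_neq0]] := filter_ex (filterI near_B (@nbhs_dnbhs_neq (R : tvsType R) 0)).
by exists e.
Qed.

Lemma Q_ge0 v : 0 <= omega (D v) v.
Proof.
have [m orbit_lb] := Bset_orbit_lbound _ B_abc.
have := orbit_lb_quad_ge0 orbit_lb v.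
by rewrite pmulr_rge0 // divr_gt0 // mulrC.
Qed.

Lemma Bset_lin_coef_Qbounded {a' c' : R} {b' : V} : Bset orbit (a', b', c') -> Qbounded (lin_coef b' c').
Proof.
move=> /Bset_orbit_lbound[m orbit_lb].
exists (lam (a', b', c') + `|c' * zs / 2| - m) => v Qv_le1.
by apply: orbit_lb_lin_coef_bound => //; rewrite Q_ge0.
Qed.

Lemma Q_definite v : omega (D v) v = 0 -> v = 0.
Proof.
move=> Qv0; apply: omega_nondeg => w; rewrite omegaC; apply/eqP; rewrite oppr_eq0.
have [e e_neq0 /Bset_orbit_lbound[m' orbit_lb']] := interior_Bset_shift w.
have [m orbit_lb] := Bset_orbit_lbound _ B_abc.
have := orbit_lb_lin_coef0 orbit_lb' v Qv0.
rewrite lin_coefD (orbit_lb_lin_coef0 orbit_lb v Qv0) add0r omegaZl mulrA.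
by move/eqP; rewrite !mulf_eq0 (negbTE zs_neq0) (negbTE e_neq0).
Qed.

Lemma omega_Qbounded x : Qbounded (omega x).
Proof.
have [e e_neq0 B_shift] := interior_Bset_shift x.
apply: (@QboundedZ_inv (zs * e)); first by rewrite mulf_neq0.
have -> : (fun v => zs * e * omega x v) =
    (fun v => lin_coef (b + e *: x) c v + -1 * lin_coef b c v).
  by apply/funext => v; rewrite lin_coefD omegaZl; ring.
exact: QboundedD (Bset_lin_coef_Qbounded B_shift) (QboundedZ _ (Bset_lin_coef_Qbounded B_abc)).
Qed.

Lemma alphaD_Qbounded : Qbounded (alpha \o D).
Proof.
have c_neq0 : c != 0 by apply: contraTneq zsc_gt0 => ->; rewrite mulr0 ltxx.
apply: (QboundedZ_inv c_neq0).
have -> : (fun v => c * (alpha \o D) v) = (fun v => lin_coef b c v + - zs * omega b v).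
  by apply/funext => v; rewrite /lin_coef (omegaC v b) /=; ring.
exact: QboundedD (Bset_lin_coef_Qbounded B_abc) (QboundedZ _ (omega_Qbounded b)).
Qed.

End InteriorPoint.

Lemma nbhs0_shift y1 y2 y3 (U : set RVR) :
  nbhs ((y1, y2, y3) : RVR) U -> nbhs (0 : V) [set x | U (y1, y2 + x, y3)].
Proof.
have y2_shift : (fun x : V => y2 + x) @ 0 --> y2.
  by apply: cvg_trans (tmod_cvgD (cvg_cst y2) cvg_id) _; rewrite addr0.
exact: (cvg_pair (cvg_pair (cvg_cst y1) y2_shift) (cvg_cst y3) : _ --> ((y1, y2, y3) : RVR)).
Qed.

Lemma Qnorm_omega_bounded_near0 :
  semi_equicontinuous orbit -> continuous (alpha : V -> R^o) -> zs != 0 ->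
  (forall v, 0 <= omega (D v) v) -> (forall x, Qbounded (omega x)) -> Qbounded (alpha \o D) ->
  exists U : set V, nbhs (0 : V) U /\ exists M : R, forall x : V, U x ->
    (Qnorm (fun v w => omega (D v) w) (omega x) <= M%:E)%E.
Proof.
move=> [[[y1 y2] y3] [U [U_nbhs [M UM]]]] alpha_cont zs_neq0 Q_ge0 omega_bd [Ca alphaD_le].
have [C2 omega_y2_le] := omega_bd y2.
exists [set x | U (y1, y2 + x, y3) /\ `|alpha x| < 1]; split.
  apply: filterI; first exact: nbhs0_shift.
  have alpha0 : alpha 0 = 0 := lin0 alpha_lin_o.
  have := alpha_cont 0; rewrite /continuous_at alpha0 => alpha_cvg.
  exact: alpha_cvg _ (@nbhs0_lt _ R^o _ ltr01).
exists ((M + lam (y1, y2, y3) + 1 + `|y3 * zs / 2| + `|y3| * Ca + `|zs| * C2) / `|zs|).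
move=> x [Ux alpha_x_lt1]; apply: Qnorm_le => v Qv_le1.
have := orbit_lb_lin_coef_bound (support_orbit_lbound _ _ (UM _ Ux).2) v.
rewrite Q_ge0 Qv_le1 lin_coefD => /(_ isT); rewrite /lin_coef /dual_pt /= alphaD.
have := alphaD_le v Qv_le1; have := omega_y2_le v Qv_le1; rewrite /= (omegaC v y2).
set A := y3 * alpha (D v); set B := omega y2 v; set Cx := omega x v.
move=> B_le A_le lin_le.
have tri : `|zs * Cx| <= `|A - zs * - B + zs * Cx| + `|A| + `|zs| * C2.
  have Cx_split : zs * Cx = (A - zs * - B + zs * Cx - A) + zs * - B by ring.
  rewrite {1}Cx_split (le_trans (ler_normD _ _)) // lerD ?ler_normB // normrM normrN.
  by rewrite ler_wpM2l.
have A_le' : `|A| <= `|y3| * Ca by rewrite normrM ler_wpM2l.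
have Cx_le : Cx * `|zs| <= `|zs * Cx|.
  by rewrite normrM mulrC ler_wpM2l // ler_norm.
have alpha_x_le1 : alpha x <= 1 by rewrite (le_trans (ler_norm _)) // ltW.
rewrite ler_pdivlMr ?normr_gt0 //; lra.
Qed.

Lemma Qform_definite_and_bounds :
  continuous (alpha : V -> R^o) ->
  semi_equicontinuous orbit ->
  (exists y : R * V * R, interior (Bset orbit) y /\ 0 < zs * y.2) ->
  let Q := fun v w : V => omega (D v) w in
  (forall v : V, v <> 0 -> 0 < Q v v) /\
  (Q_continuous Q (alpha \o D) /\ (forall x : V, Q_continuous Q (omega x)) /\
   exists U : set V, nbhs (0 : V) U /\
     exists M : R, forall x : V, U x -> (Qnorm Q (omega x) <= M%:E)%E).
Proof.
move=> alpha_cont semi [[[a b] c] [B_interior zsc_gt0]] Q; rewrite /= in zsc_gt0.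
have zs_neq0 : zs != 0 by apply: contraTneq zsc_gt0 => ->; rewrite mul0r ltxx.
have Q_ge0 := Q_ge0 B_interior zsc_gt0.
have omega_bd := omega_Qbounded B_interior zsc_gt0.
have alphaD_bd := alphaD_Qbounded B_interior zsc_gt0.
split.
  move=> v v_neq0; rewrite /Q lt_neqAle Q_ge0 andbT eq_sym.
  by apply/eqP => /(Q_definite B_interior zsc_gt0).
split; first exact: Qbounded_Q_continuous.
split; first by move=> x; exact: Qbounded_Q_continuous.
exact: Qnorm_omega_bounded_near0.
Qed.

End OscillatorAlgebra.
Theorem lemma2p6 (R : realType) (V : tvsType R)
  (omega : V -> V -> R) (gamma : R -> V -> V) (D : V -> V)
  (zs : R) (alpha : V -> R) (ts : R)
  (omega_cont : continuous (fun p : V * V => (omega p.1 p.2 : R^o)))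
  (omega_linl : forall (a : R) (u v w : V),
      omega (a *: u + v) w = a * omega u w + omega v w)
  (omega_linr : forall (a : R) (u v w : V),
      omega u (a *: v + w) = a * omega u v + omega u w)
  (omega_alt : forall v : V, omega v v = 0)
  (omega_nondeg : forall v : V, (forall w : V, omega v w = 0) -> v = 0)
  (gamma_lin : forall (t a : R) (v w : V),
      gamma t (a *: v + w) = a *: gamma t v + gamma t w)
  (gamma_cont : forall t : R, continuous (gamma t))
  (gamma_sympl : forall (t : R) (v w : V), omega (gamma t v) (gamma t w) = omega v w)
  (gamma0 : forall v : V, gamma 0 v = v)
  (gammaD : forall (s t : R) (v : V), gamma (s + t) v = gamma s (gamma t v))
  (gamma_smooth : smooth (fun p : R * V => gamma p.1 p.2))
  (D_gen : forall v : V, has_dderiv (fun t : R => gamma t v) 0 1 (D v))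
  (alpha_lin : forall (a : R) (v w : V), alpha (a *: v + w) = a * alpha v + alpha w)
  (alpha_cont : continuous (alpha : V -> R^o))
  (Hsemi : semi_equicontinuous (coadjoint_orbit omega gamma (dual_pt zs alpha ts)))
  (Hint : exists y : R * V * R,
      interior (Bset (coadjoint_orbit omega gamma (dual_pt zs alpha ts))) y
      /\ 0 < zs * y.2) :
  let Q := fun v w : V => omega (D v) w in
  (forall v : V, v <> 0 -> 0 < Q v v) /\
  (Q_continuous Q (alpha \o D) /\ (forall x : V, Q_continuous Q (omega x)) /\
   exists U : set V, nbhs (0 : V) U /\
     exists M : R, forall x : V, U x -> (Qnorm Q (omega x) <= M%:E)%E).
Proof.
exact: (@Qform_definite_and_bounds R V omega gamma D omega_cont omega_linl omega_linr
  omega_alt omega_nondeg gamma_lin gamma0 D_gen zs ts alpha alpha_lin alpha_cont Hsemi Hint).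
Qed.
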